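(* Let $T$ be a monoidal monad on $\mathbf{Set}$ and let $m$ be a binary operation symbol of a signature $\Sigma$. If $T$ preserves the equation $m(x,x)=x$, then $T$ is relevant.
   Context: A monoidal monad on $\mathbf{Set}$ is a monad $(T,\eta,\mu)$ with a natural transformation $\psi_{X,Y}\colon TX\times TY\to T(X\times Y)$ making $T$ lax monoidal with unit $\psi^0=\eta_1$, such that $\eta,\mu$ are monoidal natural transformations (equivalently, a commutative monad with its double strength); $\psi^n$ is the $n$-ary version. For a $\Sigma$-algebra $\mathcal A$ on $A$, $\widehat T\mathcal A$ is the algebra on $TA$ with $\sigma_{\widehat T\mathcal A}=T\sigma_{\mathcal A}\circ\psi^{\mathrm{ar}(\sigma)}$. $T$ preserves an equation if $\widehat T\mathcal A$ satisfies it whenever $\mathcal A$ does. $T$ is relevant if $\psi_{A,A}\circ\Delta_{TA}=T\Delta_A$ for all sets $A$ (where $\Delta$ is the diagonal); equivalently $\psi_{A,B}\circ\chi_{A,B}=\mathrm{id}_{T(A\times B)}$ for all $A,B$, where $\chi_{A,B}=\langle T\pi_1,T\pi_2\rangle$. *)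

From mathcomp Require Import all_boot.
Set Implicit Arguments. Unset Strict Implicit. Unset Printing Implicit Defensive.

(* Set is modelled by Type; functions are compared pointwise. *)

(** Monoidal monad on Set: a monad (T, eta, mu) with a lax monoidal
    structure psi : TX x TY -> T(X x Y), unit psi^0 = eta_1, such that
    eta and mu are monoidal natural transformations. *)
Record monoidal_monad := MonoidalMonad {
  T : Type -> Type;
  fmap : forall X Y : Type, (X -> Y) -> T X -> T Y;
  eta : forall X : Type, X -> T X;
  mu : forall X : Type, T (T X) -> T X;
  psi : forall X Y : Type, T X * T Y -> T (X * Y);
  fmap_id : forall X (t : T X), fmap (fun x => x) t = t;
  fmap_comp : forall X Y Z (f : X -> Y) (g : Y -> Z) (t : T X),
      fmap (fun x => g (f x)) t = fmap g (fmap f t);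
  eta_nat : forall X Y (f : X -> Y) (x : X), fmap f (eta x) = eta (f x);
  mu_nat : forall X Y (f : X -> Y) (t : T (T X)),
      fmap f (mu t) = mu (fmap (fmap f) t);
  mu_eta_l : forall X (t : T X), mu (eta t) = t;
  mu_eta_r : forall X (t : T X), mu (fmap (@eta X) t) = t;
  mu_assoc : forall X (t : T (T (T X))), mu (mu t) = mu (fmap (@mu X) t);
  psi_nat : forall X X' Y Y' (f : X -> X') (g : Y -> Y') (a : T X) (b : T Y),
      psi (fmap f a, fmap g b) = fmap (fun p => (f p.1, g p.2)) (psi (a, b));
  (* lax monoidal coherence (associator and unitors of (Set, x, 1)) *)
  psi_assoc : forall X Y Z (a : T X) (b : T Y) (c : T Z),
      fmap (fun p => (p.1.1, (p.1.2, p.2))) (psi (psi (a, b), c))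
      = psi (a, psi (b, c));
  psi_unit_l : forall Y (b : T Y), fmap snd (psi (eta tt, b)) = b;
  psi_unit_r : forall X (a : T X), fmap fst (psi (a, eta tt)) = a;
  eta_monoidal : forall X Y (x : X) (y : Y), psi (eta x, eta y) = eta (x, y);
  mu_monoidal : forall X Y (a : T (T X)) (b : T (T Y)),
      mu (fmap (@psi X Y) (psi (a, b))) = psi (mu a, mu b);
  mu_monoidal_unit : mu (fmap (@eta unit) (eta tt)) = eta tt
}.

Arguments fmap {m X Y} f t.
Arguments eta {m X} x.
Arguments mu {m X} t.
Arguments psi {m X Y} p.

(** n-tuples are functions 'I_n -> A. *)
Definition tcons (A : Type) (n : nat) (a : A) (f : 'I_n -> A) : 'I_n.+1 -> A :=
  fun i => match unlift ord0 i with Some j => f j | None => a end.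

Definition tnil (A : Type) : 'I_0 -> A :=
  fun i => False_rect A ((fun e : false = true => match e in _ = b return (if b then False else True) with erefl => I end) (etrans (esym (ltn0 i)) (ltn_ord i))).

(** n-ary version psi^n : (TA)^n -> T(A^n), with psi^0 = eta_1 (up to 1 ~ A^0). *)
Fixpoint psin (m : monoidal_monad) (A : Type) (n : nat) :
    ('I_n -> T m A) -> T m ('I_n -> A) :=
  match n with
  | 0 => fun _ => fmap (fun _ : unit => @tnil A) (eta tt)
  | n'.+1 => fun f =>
      fmap (fun p : A * ('I_n' -> A) => tcons p.1 p.2)
           (psi (f ord0, psin (fun j => f (lift ord0 j))))
  end.

Record signature := Signature { op :> Type; ar : op -> nat }.

Definition algebra (S : signature) (A : Type) :=
  forall s : S, ('I_(ar s) -> A) -> A.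

Definition hatT (m : monoidal_monad) (S : signature) (A : Type)
    (alg : algebra S A) : algebra S (T m A) :=
  fun s args => fmap (alg s) (psin args).
Arguments hatT m {S A} alg.

Inductive term (S : signature) (V : Type) : Type :=
  | Var : V -> term S V
  | Op : forall s : S, ('I_(ar s) -> term S V) -> term S V.

Fixpoint eval (S : signature) (V A : Type) (alg : algebra S A) (rho : V -> A)
    (t : term S V) : A :=
  match t with
  | Var v => rho v
  | Op s args => alg s (fun i => eval alg rho (args i))
  end.

Record equation (S : signature) := Equation {
  eq_vars : Type; eq_lhs : term S eq_vars; eq_rhs : term S eq_vars }.

Definition satisfies (S : signature) (A : Type) (alg : algebra S A)
    (e : equation S) : Prop :=
  forall rho : eq_vars e -> A, eval alg rho (eq_lhs e) = eval alg rho (eq_rhs e).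

Definition preserves (m : monoidal_monad) (S : signature) (e : equation S) : Prop :=
  forall (A : Type) (alg : algebra S A), satisfies alg e -> satisfies (hatT m alg) e.

Definition idem_eq (S : signature) (s : S) : equation S :=
  @Equation S unit (@Op S unit s (fun _ => Var S tt)) (Var S tt).

Definition relevant (m : monoidal_monad) : Prop :=
  forall (A : Type) (a : T m A), psi (a, a) = fmap (fun x => (x, x)) a.

From mathcomp Require Import all_boot.
From Stdlib Require Import FunctionalExtensionality.

(* The rectangular band (x, y) * (x', y') = (x, y') on A * A is idempotent,
   so T preserves idempotency in it.  Evaluating the lifted product at the
   diagonal image t of a in T (A * A) gives T(product)(psi (t, t)) = t, i.e.
   psi (a, a) = T(diag) a.  Since A may be empty, the band is extended to all
   arities on option (A * A), and Some is cancelled through the Kleisli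
   extension rather than through a retraction of Some. *)

Definition tpair {A : Type} (x y : A) : 'I_2 -> A := tcons x (tcons y (@tnil A)).

Lemma tpair_ord0 (A : Type) (x y : A) : tpair x y ord0 = x.
Proof. by rewrite /tpair /tcons unlift_none. Qed.

Lemma tpair_ord_max (A : Type) (x y : A) : tpair x y ord_max = y.
Proof.
rewrite /tpair /tcons; case: unliftP => [j _|//].
by rewrite /tcons (ord1 j) unlift_none.
Qed.

Section MonoidalMonadFacts.
Variable m : monoidal_monad.

Lemma psi_eta_r (X Y : Type) (u : T m X) (y : Y) :
  psi (u, eta y) = fmap (fun x => (x, y)) u.
Proof.
rewrite -{1}(@fmap_id m _ u) -(eta_nat m (fun _ : unit => y) tt) psi_nat.
by rewrite -[in RHS](@psi_unit_r m _ u) -fmap_comp.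
Qed.

Lemma fmap_Some_inj (X : Type) (u v : T m X) :
  fmap Some u = fmap Some v -> u = v.
Proof.
have Kleisli_Some_K (w w0 : T m X) :
    mu (fmap (fun o => if o is Some x then eta x else w0) (fmap Some w)) = w.
  by rewrite -fmap_comp mu_eta_r.
by move=> eq_uv; rewrite -(Kleisli_Some_K u u) eq_uv Kleisli_Some_K.
Qed.

Lemma psin2 (A : Type) (f : 'I_2 -> T m A) :
  psin f = fmap (fun p : A * A => tpair p.1 p.2) (psi (f ord0, f ord_max)).
Proof.
rewrite /= eta_nat psi_eta_r -fmap_comp.
rewrite -{1}[f ord0](@fmap_id m) psi_nat -fmap_comp.
by have -> : lift ord0 ord0 = ord_max :> 'I_2 by apply: val_inj.
Qed.

End MonoidalMonadFacts.

Definition rectangular_op (A : Type) (n : nat) :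
    ('I_n -> option (A * A)) -> option (A * A) :=
  match n with
  | 0 => fun _ => None
  | n'.+1 => fun args =>
      if (args ord0, args ord_max) is (Some p, Some q) then Some (p.1, q.2)
      else None
  end.

Definition rectangular_alg (S : signature) (A : Type) :
  algebra S (option (A * A)) := fun s => @rectangular_op A (ar s).

Lemma rectangular_op_idem (A : Type) n (o : option (A * A)) :
  @rectangular_op A n.+1 (fun _ => o) = o.
Proof. by case: o => [[]|]. Qed.

Lemma rectangular_op_tpair (A : Type) (p q : A * A) :
  @rectangular_op A 2 (tpair (Some p) (Some q)) = Some (p.1, q.2).
Proof. by rewrite /= tpair_ord0 tpair_ord_max. Qed.

Theorem theorem5 (m : monoidal_monad) (S : signature) (s : S) :
  ar s = 2 -> preserves m (idem_eq s) -> relevant m.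
Proof.
move=> ar_s preserves_idem A a.
have idem_rect : satisfies (@rectangular_alg S A) (idem_eq s).
  by move=> rho /=; rewrite /rectangular_alg ar_s rectangular_op_idem.
pose t := fmap (fun x : A => Some (x, x)) a.
have := preserves_idem _ _ idem_rect (fun _ => t).
rewrite /= /hatT /rectangular_alg; move: (ar s) ar_s => _ ->.
rewrite psin2 -fmap_comp /t psi_nat -fmap_comp.
rewrite (_ : (fun p : A * A => _) = Some); last first.
  by apply: functional_extensionality => -[x y]; rewrite rectangular_op_tpair.
by rewrite (fmap_comp (fun x => (x, x)) Some) => /fmap_Some_inj.
Qed.
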